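(* For $j\ge 1$ and $1\le p\le n-1$, let $V_{j,p}$ be the subspace of $V^{\otimes n}$ spanned by the basis vectors $\mathbf i$ with $c_p(\mathbf i)\ge j$. If $\mathbf i$ is a basis vector lying in $V_{j,p}$, then $$T_p^{-1}\cdots T_{n-1}^{-1}S_{n-1}\cdots S_p(\mathbf i)\in \mathbf i+V_{j+1,p}.$$
   Context: Let $m,n\ge 1$ and $\mathbb K=\mathbb C(q,Q_1,\dots,Q_m)$, the field of rational functions in indeterminates $q,Q_1,\dots,Q_m$. Fix nonnegative integers $k_1,\dots,k_m,\ell_1,\dots,\ell_m$ with $N=\sum_{c=1}^m(k_c+\ell_c)>0$. Let $V$ be a $\mathbb K$-superspace with homogeneous basis $\{v^{(c)}_a:1\le c\le m,\ 1\le a\le k_c+\ell_c\}$, where $v^{(c)}_a$ is even if $a\le k_c$ and odd if $a>k_c$; $v^{(c)}_a$ has colour $c$. Totally order this basis by $v^{(c)}_a<v^{(c')}_b$ iff $c<c'$, or $c=c'$ and $a<b$, and write it as $u_1<\cdots<u_N$. Let $\bar j\in\{0,1\}$ be the parity of $u_j$ and $\mathrm{col}(j)$ its colour. For $\mathbf i=(i_1,\dots,i_n)\in\{1,\dots,N\}^n$ write also $\mathbf i$ for the basis vector $u_{i_1}\otimes\cdots\otimes u_{i_n}$ of $V^{\otimes n}$, put $c_t(\mathbf i)=\mathrm{col}(i_t)$, and let $\mathbf i s_a$ be $\mathbf i$ with entries $a,a+1$ interchanged. Linear operators on $V^{\otimes n}$ ($1\le a\le n-1$): $s_a(\mathbf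 i)=(-1)^{\bar i_a}\mathbf i$ if $i_a=i_{a+1}$, $s_a(\mathbf i)=(-1)^{\bar i_a\bar i_{a+1}}\mathbf i s_a$ otherwise; $T_a(\mathbf i)=(q-q^{-1})\mathbf i+(-1)^{\bar i_a\bar i_{a+1}}\mathbf i s_a$ if $i_a<i_{a+1}$; $T_a(\mathbf i)=\frac{(q-q^{-1})+(-1)^{\bar i_a}(q+q^{-1})}{2}\mathbf i$ if $i_a=i_{a+1}$; $T_a(\mathbf i)=(-1)^{\bar i_a\bar i_{a+1}}\mathbf i s_a$ if $i_a>i_{a+1}$ (each $T_a$ is invertible); $S_a(\mathbf i)=T_a(\mathbf i)$ if $c_a(\mathbf i)=c_{a+1}(\mathbf i)$, and $S_a(\mathbf i)=s_a(\mathbf i)$ otherwise. Products of operators denote composition. *)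

From HB Require Import structures.
From mathcomp Require Import all_boot all_algebra.
From mathcomp Require Import Rstruct.
From mathcomp Require Import complex.
From mathcomp Require Import mpoly.
From mathcomp Require Import fraction.
Set Implicit Arguments. Unset Strict Implicit. Unset Printing Implicit Defensive.
Import GRing.Theory.
Local Open Scope ring_scope.

(* The field K = C(q, Q_1, ..., Q_m): fraction field of the polynomial    *)
(* ring over C = R[i] in m+1 variables; variable 0 is q, variable c is Q_c. *)
Definition CC : fieldType := (Rdefinitions.R)[i].
Notation Kfield m := {fraction {mpoly CC[m.+1]}}.
Definition indet (m : nat) (t : 'I_m.+1) : Kfield m :=
  FracField.tofrac (mpolyX CC (mnm1 t) : {mpoly CC[m.+1]}).
Definition qvar (m : nat) : Kfield m := indet (0 : 'I_m.+1).

Section Operators.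
Variables (K : fieldType) (q : K).
Variables (m n : nat) (k l : nat -> nat).

(* The ordered basis u_1 < ... < u_N of V, listed in increasing order:    *)
(* the pair (c, a) stands for v^(c)_a (colour c in 1..m, 1 <= a <= k_c+l_c). *)
Definition basis_list : seq (nat * nat) :=
  flatten [seq [seq (c, a) | a <- iota 1 (k c + l c)] | c <- iota 1 m].

Definition dimV : nat := size basis_list.

(* A basis vector u_j is represented by j : 'I_dimV (u_{j+1} in the paper);
   the order of 'I_dimV is the order of the basis. *)
Definition col (j : 'I_dimV) : nat := (nth (0, 0) basis_list j).1.
(* parity: true = odd, i.e. a > k_c *)
Definition par (j : 'I_dimV) : bool :=
  let: (c, a) := nth (0, 0) basis_list j in (k c < a)%N.

(* basis vectors of V^{\otimes n}: tuples i = (i_1, ..., i_n) *)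
Local Notation Idx := {ffun 'I_n -> 'I_dimV}.
(* vectors of V^{\otimes n}, as coordinate functions on the basis *)
Local Notation tens := {ffun Idx -> K}.

Definition bvec (i : Idx) : tens := [ffun j => (j == i)%:R].

Definition swapf (x y : 'I_n) (i : Idx) : Idx :=
  [ffun t => if t == x then i y else if t == y then i x else i t].

Definition scl (c : K) (v : tens) : tens := [ffun t => c * v t].

Definition sgn (b : bool) : K := if b then -1 else 1.

(* images of basis vectors; x, y are the (0-based) positions a, a+1 *)
Definition s_b (x y : 'I_n) (i : Idx) : tens :=
  if i x == i y then scl (sgn (par (i x))) (bvec i)
  else scl (sgn (par (i x) && par (i y))) (bvec (swapf x y i)).

Definition T_b (x y : 'I_n) (i : Idx) : tens :=
  if (i x < i y)%N then
    scl (q - q^-1) (bvec i) + scl (sgn (par (i x) && par (i y))) (bvec (swapf x y i))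
  else if i x == i y then
    scl (((q - q^-1) + sgn (par (i x)) * (q + q^-1)) / 2%:R) (bvec i)
  else scl (sgn (par (i x) && par (i y))) (bvec (swapf x y i)).

Definition S_b (x y : 'I_n) (i : Idx) : tens :=
  if col (i x) == col (i y) then T_b x y i else s_b x y i.

Definition linext (f : Idx -> tens) (v : tens) : tens := \sum_i scl (v i) (f i).

(* operator indexed by a (1-based, 1 <= a <= n-1), acting on the tensor  *)
(* factors a and a+1, i.e. 0-based positions a-1 and a                   *)
Definition at_pos (f : 'I_n -> 'I_n -> Idx -> tens) (a : nat) (v : tens) : tens :=
  match insub a.-1, insub a with
  | Some x, Some y => linext (f x y) v
  | _, _ => v
  end.

Definition s_op := at_pos s_b.
Definition T_op := at_pos T_b.
Definition S_op := at_pos S_b.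

(* S_{n-1} ... S_p v  (S_p applied first) *)
Definition S_chain (p : nat) (v : tens) : tens :=
  foldl (fun w a => S_op a w) v (iota p (n - p)).

(* T_p^{-1} ... T_{n-1}^{-1} v  (T_{n-1}^{-1} applied first), for given inverses *)
Definition Tinv_chain (Tinv : nat -> tens -> tens) (p : nat) (v : tens) : tens :=
  foldl (fun w a => Tinv a w) v (rev (iota p (n - p))).

Definition in_V (j p : nat) (v : tens) : Prop :=
  forall i : Idx, v i != 0 -> forall x : 'I_n, nat_of_ord x = p.-1 -> (j <= col (i x))%N.

End Operators.

Notation Idx m n k l := {ffun 'I_n -> 'I_(dimV m k l)}.
Notation tens K m n k l := {ffun Idx m n k l -> K}.

From Pilot Require Import Defs.
From HB Require Import structures.
From mathcomp Require Import all_boot all_algebra.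
From mathcomp Require Import mpoly fraction.
From mathcomp Require Import zify.
Import GRing.Theory.
Local Open Scope ring_scope.
Set Implicit Arguments. Unset Strict Implicit. Unset Printing Implicit Defensive.

(* Write Z_p := T_p^-1 ... T_(n-1)^-1 S_(n-1) ... S_p, so that Z_n = 1 and
   Z_p = T_p^-1 Z_(p+1) S_p.  On a basis vector, S_p differs from T_p only by the
   term (q - q^-1) i, which T_p has and S_p lacks when col(i_p) < col(i_(p+1));
   hence, with v := S_p(i) and beta the coefficient of that term,
     Z_p(i) - i = T_p^-1 (Z_(p+1)(v) - v) - beta T_p^-1(i).
   Every basis vector t occurring in v has col(t_(p+1)) = col(i_p), so by
   downward induction on p, Z_(p+1)(v) - v is spanned by vectors u with
   col(u_(p+1)) > col(i_p).  T_p^-1(u) is supported on {u, s_p u}, and equals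
   +-s_p u when u_p < u_(p+1); since the basis order refines the colour order,
   in either case every vector occurring in T_p^-1(u) has p-th colour
   > col(i_p).  The same argument handles the second term. *)

Lemma sorted_flatten_nseq (T : eqType) (leT : rel T) (f : T -> nat) (s : seq T) :
  reflexive leT -> transitive leT -> sorted leT s ->
  sorted leT (flatten [seq nseq (f x) x | x <- s]).
Proof.
move=> leTT leT_tr; rewrite !(sorted_pairwise leT_tr).
elim: s => //= x s IH /andP[x_s pw_s]; rewrite pairwise_cat IH // andbT.
apply/andP; split.
  apply/allrelP => _ _ /nseqP[-> _] /flattenP[_ /mapP[y y_s ->] /nseqP[-> _]].
  exact: (allP x_s).
by elim: (f x) => //= d ->; rewrite andbT; apply/allP => _ /nseqP[-> _].
Qed.

Section Tensors.
Variables (K : fieldType) (m n : nat) (k l : nat -> nat).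
Local Notation Idx := (Idx m n k l).
Local Notation tens := (tens K m n k l).
Local Notation col := (@Defs.col m k l).
Local Notation bvec := (@bvec K m n k l).
Implicit Types (i t : Idx) (v w : tens).

Lemma ltn_ord_of_col (a b : 'I_(dimV m k l)) : (col a < col b)%N -> (a < b)%N.
Proof.
set cols := [seq x.1 | x <- basis_list m k l].
have colE (j : 'I_(dimV m k l)) : col j = nth 0%N cols j.
  by rewrite (nth_map (0, 0)%N) // ltn_ord.
have sorted_cols : sorted leq cols.
  rewrite /cols /basis_list map_flatten -map_comp.
  rewrite (eq_map (g := fun c => nseq (k c + l c) c)); last first.
    move=> c /=; rewrite -map_comp -[in RHS](size_iota 1 (k c + l c)).
    by elim: (iota _ _) => //= ? ? ->.
  by apply: sorted_flatten_nseq; [exact: leqnn | exact: leq_trans | exact: iota_sorted].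
rewrite ltnNge !colE; apply: contraNT; rewrite -leqNgt => le_ba.
by apply: (sorted_leq_nth leq_trans leqnn) => //; rewrite inE size_map ltn_ord.
Qed.

Lemma scl1r (v : tens) : scl 1 v = v.
Proof. by apply/ffunP => t; rewrite ffunE mul1r. Qed.

Lemma scl0r (v : tens) : scl 0 v = 0.
Proof. by apply/ffunP => t; rewrite !ffunE mul0r. Qed.

Lemma sclA a b (v : tens) : scl a (scl b v) = scl (a * b) v.
Proof. by apply/ffunP => t; rewrite !ffunE mulrA. Qed.

Definition supported (A : Idx -> Prop) v : Prop := forall t, v t != 0 -> A t.

Lemma supported0 A : supported A 0.
Proof. by move=> t; rewrite ffunE eqxx. Qed.

Lemma supportedD A v w : supported A v -> supported A w -> supported A (v + w).
Proof.
move=> Av Aw t; rewrite ffunE; have [-> | /Av //] := eqVneq (v t) 0.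
by rewrite add0r => /Aw.
Qed.

Lemma supportedN A v : supported A v -> supported A (- v).
Proof. by move=> Av t; rewrite ffunE oppr_eq0 => /Av. Qed.

Lemma supportedB A v w : supported A v -> supported A w -> supported A (v - w).
Proof. by move=> Av /supportedN; apply: supportedD. Qed.

Lemma supported_scl A c v : supported A v -> supported A (scl c v).
Proof. by move=> Av t; rewrite ffunE mulf_eq0 negb_or => /andP[_ /Av]. Qed.

Lemma supported_bvec (A : Idx -> Prop) i : A i -> supported A (bvec i).
Proof. by move=> Ai t; rewrite ffunE; have [-> | _] := eqVneq t i; rewrite ?eqxx. Qed.

Lemma supported_scl_bvec (A : Idx -> Prop) c i : A i -> supported A (scl c (bvec i)).
Proof. by move=> Ai; apply: supported_scl; apply: supported_bvec. Qed.

Lemma supported_sum A (F : Idx -> tens) :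
  (forall t, supported A (F t)) -> supported A (\sum_t F t).
Proof.
by move=> AF; apply: (big_ind (supported A)); [exact: supported0 | exact: supportedD |].
Qed.

Lemma sub_supported (A B : Idx -> Prop) v :
  (forall t, A t -> B t) -> supported A v -> supported B v.
Proof. by move=> AB Av t /Av /AB. Qed.

Lemma bvec_id i : bvec i i = 1.
Proof. by rewrite ffunE eqxx. Qed.

Lemma tens_decomp (v : tens) : v = \sum_t scl (v t) (bvec t).
Proof.
apply/ffunP => s; rewrite sum_ffunE (bigD1 s) //= big1 ?addr0 => [|t /negbTE ts].
  by rewrite !ffunE eqxx mulr1.
by rewrite !ffunE eq_sym ts mulr0.
Qed.

Definition tlinear (g : tens -> tens) : Prop :=
  forall c v w, g (scl c v + w) = scl c (g v) + g w.

Section TensorLinear.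
Variables (g : tens -> tens) (gL : tlinear g).

Lemma tlinearD v w : g (v + w) = g v + g w.
Proof. by rewrite -{1}(scl1r v) gL scl1r. Qed.

Lemma tlinear0 : g 0 = 0.
Proof. by apply: (addIr (g 0)); rewrite add0r -tlinearD addr0. Qed.

Lemma tlinearZ c v : g (scl c v) = scl c (g v).
Proof. by rewrite -[scl c v]addr0 gL tlinear0 addr0. Qed.

Lemma tlinearB v w : g (v - w) = g v - g w.
Proof. by apply: (addIr (g w)); rewrite -tlinearD !subrK. Qed.

Lemma tlinear_bvec_sum v : g v = \sum_t scl (v t) (g (bvec t)).
Proof.
rewrite {1}(tens_decomp v) (big_morph g tlinearD tlinear0).
by apply: eq_bigr => t _; rewrite tlinearZ.
Qed.

Lemma supported_tlinear (A B : Idx -> Prop) v : supported A v ->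
  (forall t, A t -> supported B (g (bvec t))) -> supported B (g v).
Proof.
move=> Av ABg; rewrite tlinear_bvec_sum; apply: supported_sum => t.
have [-> | /Av At] := eqVneq (v t) 0; first by rewrite scl0r; apply: supported0.
by apply: supported_scl; apply: ABg.
Qed.

Lemma tlinear_subid : tlinear (fun v => g v - v).
Proof.
move=> c v w; rewrite gL; apply/ffunP => t.
by rewrite !ffunE mulrBr opprD addrACA.
Qed.

End TensorLinear.

Lemma tlinear_can2 f g : tlinear f -> cancel f g -> cancel g f -> tlinear g.
Proof. by move=> fL fK gK c v w; apply: (canLR fK); rewrite fL !gK. Qed.

Lemma tlinear_comp f g : tlinear f -> tlinear g -> tlinear (fun v => f (g v)).
Proof. by move=> fL gL c v w; rewrite gL fL. Qed.

Lemma tlinear_foldl (F : tens -> nat -> tens) s :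
  (forall a, a \in s -> tlinear (F^~ a)) -> tlinear (fun v => foldl F v s).
Proof.
elim: s => [|a s IH] FL c v w //=.
by rewrite FL ?mem_head // IH // => b b_s; apply: FL; rewrite in_cons b_s orbT.
Qed.

Lemma linext_tlinear (f : Idx -> tens) : tlinear (linext f).
Proof.
move=> c v w; apply/ffunP => t; rewrite !ffunE !sum_ffunE mulr_sumr -big_split /=.
by apply: eq_bigr => i _; rewrite !ffunE mulrDl mulrA.
Qed.

Lemma linext_bvec (f : Idx -> tens) i : linext f (bvec i) = f i.
Proof.
rewrite /linext (bigD1 i) //= big1 ?addr0 ?ffunE ?eqxx ?scl1r // => t /negbTE ti.
by rewrite ffunE ti scl0r.
Qed.

Lemma at_pos_tlinear (f : 'I_n -> 'I_n -> Idx -> tens) a : tlinear (at_pos f a).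
Proof.
move=> c v w; rewrite /at_pos.
by case: (insub a.-1) => [x|] //; case: (insub a) => [y|] //; apply: linext_tlinear.
Qed.

Lemma sgn_sqr b : sgn K b * sgn K b = 1.
Proof. by case: b; rewrite /sgn ?mulrNN mulr1. Qed.

Section AdjacentPositions.
Variables (q : K) (x y : 'I_n).
Hypothesis y_succ_x : y = x.+1 :> nat.

Lemma neq_xy : x != y.
Proof. by rewrite -val_eqE /= y_succ_x neq_ltn ltnSn. Qed.

Lemma swapf_x i : swapf x y i x = i y.
Proof. by rewrite ffunE eqxx. Qed.

Lemma swapf_y i : swapf x y i y = i x.
Proof. by rewrite ffunE eq_sym (negbTE neq_xy) eqxx. Qed.

Lemma swapf_other i s : s != x -> s != y -> swapf x y i s = i s.
Proof. by move=> sx sy; rewrite ffunE (negbTE sx) (negbTE sy). Qed.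

Lemma swapfK i : swapf x y (swapf x y i) = i.
Proof.
apply/ffunP => s; rewrite [LHS]ffunE.
have [-> | sx] := eqVneq s x; first by rewrite swapf_y.
have [-> | sy] := eqVneq s y; first by rewrite swapf_x.
by rewrite swapf_other.
Qed.

Definition swap_sign i : K := sgn K (par (i x) && par (i y)).

Lemma swap_sign_swapf i : swap_sign (swapf x y i) = swap_sign i.
Proof. by rewrite /swap_sign swapf_x swapf_y andbC. Qed.

Lemma T_b_lt i : (i x < i y)%N ->
  T_b q x y i = scl (q - q^-1) (bvec i) + scl (swap_sign i) (bvec (swapf x y i)).
Proof. by move=> lt_xy; rewrite /T_b lt_xy. Qed.

Lemma T_b_eq i : i x = i y ->
  T_b q x y i = scl (((q - q^-1) + sgn K (par (i x)) * (q + q^-1)) / 2%:R) (bvec i).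
Proof. by move=> eq_xy; rewrite /T_b eq_xy ltnn eqxx. Qed.

Lemma T_b_gt i : (i y < i x)%N -> T_b q x y i = scl (swap_sign i) (bvec (swapf x y i)).
Proof.
by move=> lt_yx; rewrite /T_b ltnNge (ltnW lt_yx) -val_eqE /= gtn_eqF.
Qed.

Definition S_defect i : K := if (col (i x) < col (i y))%N then q - q^-1 else 0.

Lemma S_bE i : S_b q x y i = T_b q x y i - scl (S_defect i) (bvec i).
Proof.
rewrite /S_b /S_defect; have [eq_col | neq_col] := eqVneq (col (i x)) (col (i y)).
  by rewrite eq_col ltnn scl0r subr0.
have neq_i : i x != i y by apply: contraNneq neq_col => ->.
rewrite /s_b (negbTE neq_i); case: ltnP => [lt_col | le_col].
  by rewrite T_b_lt ?ltn_ord_of_col // addrC addKr.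
rewrite T_b_gt ?scl0r ?subr0 //; apply: ltn_ord_of_col.
by rewrite ltn_neqAle eq_sym neq_col le_col.
Qed.

Lemma supported_S_b i :
  supported (fun t => col (t y) = col (i x) /\ forall s, s != x -> s != y -> t s = i s)
            (S_b q x y i).
Proof.
have swapf_ok : col (swapf x y i y) = col (i x) /\
    forall s, s != x -> s != y -> swapf x y i s = i s.
  by split; [rewrite swapf_y | apply: swapf_other].
rewrite /S_b; have [eq_col | neq_col] := eqVneq (col (i x)) (col (i y)); last first.
  have neq_i : i x != i y by apply: contraNneq neq_col => ->.
  by rewrite /s_b (negbTE neq_i); apply: supported_scl_bvec.
have i_ok : col (i y) = col (i x) /\ forall s, s != x -> s != y -> i s = i s by [].
case: (ltngtP (i x) (i y)) => [lt_xy | lt_yx | /val_inj eq_xy].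
- by rewrite T_b_lt //; apply: supportedD; apply: supported_scl_bvec.
- by rewrite T_b_gt //; apply: supported_scl_bvec.
- by rewrite T_b_eq //; apply: supported_scl_bvec.
Qed.

Lemma at_pos_bvec f i : at_pos f y (bvec i) = f x y i.
Proof. by rewrite /at_pos {1}y_succ_x /= !valK linext_bvec. Qed.

Lemma T_op_bvec i : T_op q y (bvec i) = T_b q x y i.
Proof. exact: at_pos_bvec. Qed.

Lemma S_op_bvec i : S_op q y (bvec i) = S_b q x y i.
Proof. exact: at_pos_bvec. Qed.

Lemma T_op_tlinear a : tlinear (T_op q a).
Proof. exact: at_pos_tlinear. Qed.

Section Inverse.
Variable Tinv : tens -> tens.
Hypotheses (TinvK : cancel (T_op q y) Tinv) (TK : cancel Tinv (T_op q y)).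

Lemma Tinv_tlinear : tlinear Tinv.
Proof. exact: tlinear_can2 (T_op_tlinear y) TinvK TK. Qed.

Lemma Tinv_bvec_lt i : (i x < i y)%N -> Tinv (bvec i) = scl (swap_sign i) (bvec (swapf x y i)).
Proof.
move=> lt_xy; have : T_op q y (bvec (swapf x y i)) = scl (swap_sign i) (bvec i).
  rewrite T_op_bvec T_b_gt; last by rewrite swapf_x swapf_y.
  by rewrite swapfK swap_sign_swapf.
move/(congr1 Tinv); rewrite TinvK (tlinearZ Tinv_tlinear) => ->.
by rewrite sclA sgn_sqr scl1r.
Qed.

Lemma supported_Tinv_bvec i :
  supported (fun t => t = i \/ t = swapf x y i) (Tinv (bvec i)).
Proof.
case: (ltngtP (i x) (i y)) => [lt_xy | lt_yx | /val_inj eq_xy].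
- by rewrite Tinv_bvec_lt //; apply: supported_scl_bvec; right.
- set j := swapf x y i; have lt_j : (j x < j y)%N by rewrite swapf_x swapf_y.
  have : T_op q y (bvec j) = scl (q - q^-1) (bvec j) + scl (swap_sign i) (bvec i).
    by rewrite T_op_bvec T_b_lt // swapfK swap_sign_swapf.
  move/(congr1 Tinv); rewrite TinvK Tinv_tlinear (tlinearZ Tinv_tlinear).
  rewrite Tinv_bvec_lt // swapfK => Ej.
  have -> : Tinv (bvec i) = scl (swap_sign i) (bvec j - scl (q - q^-1)
      (scl (swap_sign j) (bvec i))).
    by rewrite {1}Ej addrC addKr sclA sgn_sqr scl1r.
  apply: supported_scl; apply: supportedB; first by apply: supported_bvec; right.
  by apply: supported_scl; apply: supported_scl_bvec; left.
- have [c E] : exists c, T_op q y (bvec i) = scl c (bvec i).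
    by rewrite T_op_bvec T_b_eq //; eexists.
  have := congr1 Tinv E; rewrite TinvK (tlinearZ Tinv_tlinear) => Ei.
  have c_neq0 : c != 0.
    apply/eqP => c0; move/ffunP/(_ i): Ei.
    by rewrite c0 scl0r bvec_id ffunE => /eqP; rewrite oner_eq0.
  rewrite -[Tinv _]scl1r -(mulVf c_neq0) -sclA -Ei.
  by apply: supported_scl_bvec; left.
Qed.

Lemma Tinv_S_b i : Tinv (S_b q x y i) = bvec i - scl (S_defect i) (Tinv (bvec i)).
Proof. by rewrite S_bE -T_op_bvec (tlinearB Tinv_tlinear) TinvK (tlinearZ Tinv_tlinear). Qed.

Lemma Tinv_sub_bvec w i :
  Tinv w - bvec i = Tinv (w - S_b q x y i) - scl (S_defect i) (Tinv (bvec i)).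
Proof. by rewrite (tlinearB Tinv_tlinear) Tinv_S_b -addrA -opprD subrK. Qed.

Lemma supported_Tinv_bvec_col (c : nat) t : (c < col (t y))%N ->
  supported (fun u => (c < col (u x))%N /\ forall s, s != x -> s != y -> u s = t s)
            (Tinv (bvec t)).
Proof.
move=> lt_c_ty; have swapf_raised : (c < col (swapf x y t x))%N /\
    forall s, s != x -> s != y -> swapf x y t s = t s.
  by split; [rewrite swapf_x | apply: swapf_other].
have [le_tx_c | lt_c_tx] := leqP (col (t x)) c.
  rewrite Tinv_bvec_lt; first exact: supported_scl_bvec.
  exact/ltn_ord_of_col/(leq_ltn_trans le_tx_c).
by apply: (sub_supported _ (supported_Tinv_bvec (i := t))) => _ [-> | ->].
Qed.

End Inverse.

End AdjacentPositions.

Section Chain.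
Variables (q : K) (Tinv : nat -> tens -> tens).
Hypothesis Tinv_inverse : forall a, (1 <= a <= n - 1)%N ->
  forall v, T_op q a (Tinv a v) = v /\ Tinv a (T_op q a v) = v.

Lemma TinvK_at a : (1 <= a <= n - 1)%N -> cancel (T_op q a) (Tinv a).
Proof. by move=> a_range v; have [] := Tinv_inverse a_range v. Qed.

Lemma TK_at a : (1 <= a <= n - 1)%N -> cancel (Tinv a) (T_op q a).
Proof. by move=> a_range v; have [] := Tinv_inverse a_range v. Qed.

Definition Tinv_S_chain p v : tens := Tinv_chain Tinv p (S_chain q p v).

Lemma Tinv_S_chain_n v : Tinv_S_chain n v = v.
Proof. by rewrite /Tinv_S_chain /Tinv_chain /S_chain subnn. Qed.

Lemma Tinv_S_chainS p v : (p < n)%N ->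
  Tinv_S_chain p v = Tinv p (Tinv_S_chain p.+1 (S_op q p v)).
Proof.
move=> lt_pn; rewrite /Tinv_S_chain /Tinv_chain /S_chain -(subnSK lt_pn) /=.
by rewrite rev_cons foldl_rcons.
Qed.

Lemma Tinv_S_chain_tlinear p : (0 < p)%N -> tlinear (Tinv_S_chain p).
Proof.
move=> p_gt0; apply: tlinear_comp.
  apply: (tlinear_foldl (F := fun w a => Tinv a w)) => a.
  rewrite mem_rev mem_iota => a_range.
  apply: (tlinear_can2 (T_op_tlinear q a)); [apply: TinvK_at | apply: TK_at]; lia.
by apply: (tlinear_foldl (F := fun w a => S_op q a w)) => a _; apply: at_pos_tlinear.
Qed.

(* [r] is a 0-based position.  Agreement below [r] is part of the invariant
   because the operators with index > r + 1 never touch those factors. *)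
Definition raised_at (r : nat) i t : Prop :=
  (forall s : 'I_n, (s < r)%N -> t s = i s) /\
  (forall z : 'I_n, z = r :> nat -> (col (i z) < col (t z))%N).

Definition chain_raises_col p : Prop :=
  forall i, supported (raised_at p.-1 i) (Tinv_S_chain p (bvec i) - bvec i).

Lemma chain_raises_col_step p : (0 < p < n)%N -> chain_raises_col p.+1 -> chain_raises_col p.
Proof.
move=> /andP[p_gt0 p_lt_n] IH i.
have x_lt_n : (p.-1 < n)%N by lia.
pose x := Ordinal x_lt_n; pose y := Ordinal p_lt_n.
have y_succ_x : y = x.+1 :> nat by rewrite /= prednK.
have p_range : (1 <= p <= n - 1)%N by lia.
have TinvK_p : cancel (T_op q y) (Tinv p) := TinvK_at p_range.
have TK_p : cancel (Tinv p) (T_op q y) := TK_at p_range.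
pose below t := forall s : 'I_n, (s < p.-1)%N -> t s = i s.
have below_off_xy t (u : Idx) :
    below t -> (forall s, s != x -> s != y -> u s = t s) -> below u.
  by move=> t_below u_agree s lt_s; rewrite u_agree ?t_below // -val_eqE /=; lia.
have raised_Tinv t : below t -> (col (i x) < col (t y))%N ->
    supported (raised_at p.-1 i) (Tinv p (bvec t)).
  move=> t_below lt_col.
  apply: (sub_supported _ (supported_Tinv_bvec_col y_succ_x TinvK_p TK_p lt_col)).
  move=> u [lt_u u_agree]; split; first exact: below_off_xy u_agree.
  by move=> z z_x; have -> : z = x by apply: val_inj.
set v := S_b q x y i.
have supp_v : supported (fun t => below t /\ col (t y) = col (i x)) v.
  apply: (sub_supported _ (supported_S_b y_succ_x (i := i))) => t [col_t t_agree].
  by split; first exact: below_off_xy t_agree.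
have supp_diff :
    supported (fun t => below t /\ (col (i x) < col (t y))%N) (Tinv_S_chain p.+1 v - v).
  apply: (supported_tlinear (tlinear_subid (Tinv_S_chain_tlinear (ltn0Sn p))) supp_v).
  move=> t [t_below col_t]; apply: (sub_supported _ (IH t)) => u [u_agree u_raised].
  split; last by rewrite -col_t; apply: u_raised.
  by move=> s lt_s; rewrite u_agree ?t_below //; lia.
rewrite Tinv_S_chainS // (S_op_bvec q y_succ_x) (Tinv_sub_bvec y_succ_x TinvK_p TK_p).
apply: supportedB.
  apply: (supported_tlinear (Tinv_tlinear TinvK_p TK_p) supp_diff).
  by move=> t [t_below lt_col]; apply: raised_Tinv.
rewrite /S_defect; case: ifP => [lt_col | _]; last by rewrite scl0r; apply: supported0.
by apply: supported_scl; apply: raised_Tinv.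
Qed.

Lemma chain_raises_col_all p : (0 < p <= n)%N -> chain_raises_col p.
Proof.
move=> /andP[p_gt0 le_pn]; have [d] := ubnP (n - p).
elim: d p p_gt0 le_pn => // d IHd p p_gt0 le_pn lt_np_d.
have [lt_pn | ->] : (p < n)%N \/ p = n by lia.
  by apply: chain_raises_col_step; [rewrite p_gt0 | apply: IHd]; lia.
by move=> i; rewrite Tinv_S_chain_n subrr; apply: supported0.
Qed.

End Chain.

End Tensors.

Theorem mainTheorem2 (m n : nat) (k l : nat -> nat) :
  (1 <= m)%N -> (1 <= n)%N -> (0 < dimV m k l)%N ->
  forall (Tinv : nat -> tens (Kfield m) m n k l -> tens (Kfield m) m n k l),
    (forall a : nat, (1 <= a <= n - 1)%N ->
       forall v, T_op (qvar m) a (Tinv a v) = v /\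
                 Tinv a (T_op (qvar m) a v) = v) ->
  forall (j p : nat), (1 <= j)%N -> (1 <= p <= n - 1)%N ->
  forall i : Idx m n k l,
    in_V j p (bvec (Kfield m) i) ->
    in_V j.+1 p
      (Tinv_chain Tinv p (S_chain (qvar m) p (bvec (Kfield m) i))
       - bvec (Kfield m) i).
Proof.
move=> _ _ _ Tinv Tinv_inverse j p _ p_range i i_in_V t t_supp z z_p.
have p_range' : (0 < p <= n)%N by lia.
have [_ raised_z] := chain_raises_col_all Tinv_inverse p_range' t_supp.
apply: leq_ltn_trans (raised_z z z_p).
by apply: i_in_V z_p; rewrite bvec_id oner_eq0.
Qed.
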